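(* Let $1\le r\le s\le t$ and let $u=ABCd$, $v=A'B'C'd'$ be vertices of $E3C(r,s,t)$ with $A\ne A'$, $B=B'$, $C\ne C'$ and $d\ne d'$. Then there exist $2r+2$ pairwise internally disjoint $u$–$v$ paths in $E3C(r,s,t)$, each of length at most $r+t+7$.
   Context: The exchanged 3-ary $n$-cube $E3C(r,s,t)$ ($r,s,t\ge1$, $n=r+s+t+1$): vertices are strings written $x=ABCd$ with $A\in\{0,1,2\}^r$, $B\in\{0,1,2\}^s$, $C\in\{0,1,2\}^t$, $d\in\{0,1,2\}$. Two distinct vertices $x=ABCd$, $y=A'B'C'd'$ are adjacent iff one of: (E0) $A=A',B=B',C=C'$ and $d\ne d'$; (E1) $d=d'=0$, $A=A'$, $B=B'$ and $C,C'$ differ in exactly one position; (E2) $d=d'=1$, $A=A'$, $C=C'$ and $B,B'$ differ in exactly one position; (E3) $d=d'=2$, $B=B'$, $C=C'$ and $A,A'$ differ in exactly one position. Paths are internally disjoint if they share no vertices other than their endpoints; length = number of edges. *)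

From mathcomp Require Import all_boot.
Set Implicit Arguments. Unset Strict Implicit. Unset Printing Implicit Defensive.

Definition word (k : nat) := {ffun 'I_k -> 'I_3}.
Definition e3c_vertex (r s t : nat) : finType :=
  (word r * word s * word t * 'I_3)%type.

Definition vA r s t (x : e3c_vertex r s t) : word r := x.1.1.1.
Definition vB r s t (x : e3c_vertex r s t) : word s := x.1.1.2.
Definition vC r s t (x : e3c_vertex r s t) : word t := x.1.2.
Definition vd r s t (x : e3c_vertex r s t) : 'I_3 := x.2.

Definition diff1 k (f g : word k) : bool := #|[set i | f i != g i]| == 1.

Definition e3c_adj r s t : rel (e3c_vertex r s t) := fun x y =>
  [|| [&& vA x == vA y, vB x == vB y, vC x == vC y & vd x != vd y],
      [&& val (vd x) == 0, val (vd y) == 0, vA x == vA y,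
                   vB x == vB y & diff1 (vC x) (vC y)],
      [&& val (vd x) == 1, val (vd y) == 1, vA x == vA y,
                   vC x == vC y & diff1 (vB x) (vB y)]
   | [&& val (vd x) == 2, val (vd y) == 2, vB x == vB y,
                   vC x == vC y & diff1 (vA x) (vA y)] ].

(* A u-v path is given by the vertex sequence u :: p: consecutive vertices
   adjacent, ending at v, no repeated vertex. Its length is size p. *)
Definition is_path r s t (u v : e3c_vertex r s t) (p : seq (e3c_vertex r s t)) : bool :=
  [&& path (@e3c_adj r s t) u p, last u p == v & uniq (u :: p)].

Definition int_disjoint r s t (u v : e3c_vertex r s t) (p q : seq (e3c_vertex r s t)) : Prop :=
  forall x, x \in u :: p -> x \in u :: q -> x = u \/ x = v.

From mathcomp Require Import all_boot zify fingroup perm.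
Set Implicit Arguments. Unset Strict Implicit. Unset Printing Implicit Defensive.

(* Every path leaves u through its own neighbour: the 2r "main" paths start by shifting
   one letter of A (or of C, when u lies in dimension class 0) by 1 or 2, and then either
   step to their own neighbour of B, which exists because r <= s <= t, or aim at their own
   neighbour of v.  The remaining letters are corrected one position at a time, for at most
   r + t steps; two extra paths are routed around the main ones through the other dimension
   classes.  The paths are first built as walks, which are then shortened, and disjointness
   is certified by an owner function sending each vertex to the only walk that may pass
   through it.  Reversing the paths reduces the six pairs (d, d') to (2, 1), (0, 1), (2, 0). *)

Section WordWalk.
Variable n : nat.
Implicit Types (X Y Z W : word n) (o : seq 'I_n).

Definition wset X (l : 'I_n) (y : 'I_3) : word n := [ffun j => if j == l then y else X j].

Fixpoint word_walk X Y o : seq (word n) :=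
  if o is l :: o' then
    if X l == Y l then word_walk X Y o' else wset X l (Y l) :: word_walk (wset X l (Y l)) Y o'
  else [::].

Lemma diff1C X Y : diff1 X Y = diff1 Y X.
Proof.
rewrite /diff1 (_ : [set j | Y j != X j] = [set j | X j != Y j]) //.
by apply/setP => j; rewrite !inE eq_sym.
Qed.

Lemma diff1_wset X l y : X l != y -> diff1 X (wset X l y).
Proof.
move=> Xly; rewrite /diff1 (_ : [set j | _] = [set l]) ?cards1 //.
apply/setP => j; rewrite !inE ffunE; case: (eqVneq j l) => [->|] //.
by rewrite eqxx.
Qed.

Lemma word_walk_path X Y o : path (@diff1 n) X (word_walk X Y o).
Proof.
elim: o X => //= l o IH X; case: eqP => [_|/eqP XYl]; first exact: IH.
by rewrite /= diff1_wset ?IH.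
Qed.

Lemma last_word_walk X Y o :
  last X (word_walk X Y o) = [ffun j => if j \in o then Y j else X j].
Proof.
elim: o X => [|l o IH] X /=; first by apply/ffunP => j; rewrite ffunE.
case: eqP => [XYl|_]; rewrite /= IH; apply/ffunP => j; rewrite !ffunE in_cons.
  by case: (eqVneq j l) => [->|]; case: ifP.
by case: (eqVneq j l) => [->|]; case: ifP.
Qed.

Lemma size_word_walk X Y o : size (word_walk X Y o) <= size o.
Proof. by elim: o X => //= l o IH X; case: ifP => _ /=; [exact: leqW | rewrite ltnS]. Qed.

Lemma word_walk_agree X Y o Z j : X j = Y j -> Z \in word_walk X Y o -> Z j = Y j.
Proof.
elim: o X => //= l o IH X XYj; case: ifP => _; first exact: IH.
have wYj : wset X l (Y l) j = Y j by rewrite ffunE; case: eqP => [->|].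
by rewrite in_cons => /orP[/eqP->|]; last exact: IH.
Qed.

Lemma word_walk_untouched X Y o Z j : j \notin o -> Z \in word_walk X Y o -> Z j = X j.
Proof.
elim: o X => //= l o IH X; rewrite in_cons negb_or => /andP[jl jo].
case: ifP => _; first exact: IH.
have wXj : wset X l (Y l) j = X j by rewrite ffunE (negbTE jl).
by rewrite in_cons => /orP[/eqP->|/(IH _ jo)->].
Qed.

Lemma word_walk_cat X Y o1 o2 :
  word_walk X Y (o1 ++ o2) = word_walk X Y o1 ++ word_walk (last X (word_walk X Y o1)) Y o2.
Proof. by elim: o1 X => //= l o1 IH X; case: ifP => _; rewrite IH. Qed.

Definition covering o := [forall j, j \in o].

Lemma last_word_walk_covering X Y o : covering o -> last X (word_walk X Y o) = Y.
Proof.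
move/forallP=> co; rewrite last_word_walk; apply/ffunP => j.
by rewrite ffunE co.
Qed.

Definition ord_first (p : 'I_n) := p :: [seq j <- enum 'I_n | j != p].
Definition ord_last (p : 'I_n) := rcons [seq j <- enum 'I_n | j != p] p.

Lemma covering_enum : covering (enum 'I_n).
Proof. by apply/forallP => j; rewrite mem_enum. Qed.

Lemma covering_first p : covering (ord_first p).
Proof. by apply/forallP => j; rewrite in_cons mem_filter mem_enum andbT; case: eqP. Qed.

Lemma covering_last p : covering (ord_last p).
Proof. by apply/forallP => j; rewrite mem_rcons in_cons mem_filter mem_enum andbT; case: eqP. Qed.

Lemma size_others p : (size [seq j <- enum 'I_n | j != p]).+1 = n.
Proof.
have := count_predC (pred1 p) (enum 'I_n).
rewrite size_filter (count_uniq_mem _ (enum_uniq _)) mem_enum -cardE card_ord.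
by rewrite add1n.
Qed.

Lemma size_ord_last p : size (ord_last p) = n.
Proof. by rewrite size_rcons size_others. Qed.

Lemma word_walk_first X Y p o Z : Z \in word_walk X Y (p :: o) -> Z p = Y p.
Proof.
rewrite /=; case: eqP => [XYp|_]; first exact: word_walk_agree.
have wYp : wset X p (Y p) p = Y p by rewrite ffunE eqxx.
by rewrite in_cons => /orP[/eqP->|]; last exact: word_walk_agree.
Qed.

Lemma word_walk_last X Y p Z : Z \in word_walk X Y (ord_last p) -> Z p = X p \/ Z = Y.
Proof.
rewrite /ord_last -cats1 word_walk_cat mem_cat => /orP[|].
  by move/word_walk_untouched=> ->; [left | rewrite mem_filter eqxx].
rewrite /=; case: ifP => // _; rewrite mem_seq1 => /eqP->; right.
apply/ffunP => j; rewrite ffunE last_word_walk ffunE mem_filter mem_enum andbT.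
by case: (eqVneq j p) => [->|].
Qed.

Lemma word_walk_last_neq X Y p W Z :
  Z \in word_walk X Y (ord_last p) -> X p != W p -> Y != W -> Z != W.
Proof.
case/word_walk_last=> [Zp|-> //] XWp _; apply: contraNneq XWp => ZW.
by rewrite -Zp ZW.
Qed.

End WordWalk.

Definition shift3 (x : 'I_3) (b : bool) : 'I_3 := Ordinal (ltn_pmod (x + b.+1) (isT : 0 < 3)).

Lemma shift3_neq x b : shift3 x b != x.
Proof. by case: x => [[|[|[|?]]] ?] //; case: b. Qed.

Lemma shift3_inj x : injective (shift3 x).
Proof. by case: x => [[|[|[|?]]] ?] // [] [] // /(congr1 val). Qed.

Section Neighbours.
Variable n : nat.
Implicit Types (X Y : word n) (k : 'I_n * bool).

Definition nbr X k : word n := wset X k.1 (shift3 (X k.1) k.2).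

Lemma diff1_nbr X k : diff1 X (nbr X k).
Proof. by rewrite diff1_wset // eq_sym shift3_neq. Qed.

Lemma nbr_neq X k : nbr X k != X.
Proof.
apply/eqP => /ffunP /(_ k.1); rewrite ffunE eqxx => /eqP.
by rewrite (negbTE (shift3_neq _ _)).
Qed.

Lemma nbr_at_inj X k k' : nbr X k' k.1 = nbr X k k.1 -> k' = k.
Proof.
case: k k' => [p b] [p' b']; rewrite /nbr !ffunE /= eqxx.
case: eqVneq => [-> /shift3_inj-> // | _ /esym/eqP].
by rewrite (negbTE (shift3_neq _ _)).
Qed.

Lemma nbr_inj X : injective (nbr X).
Proof. by move=> k k' e; apply/esym/(@nbr_at_inj X k); rewrite e. Qed.

Lemma nbr_avoid X (p : 'I_n) Y : nbr X (p, nbr X (p, false) == Y) != Y.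
Proof.
case: (eqVneq (nbr X (p, false)) Y) => [<-|//].
by apply/eqP => /nbr_inj.
Qed.

End Neighbours.

Definition widen_idx m n (h : m <= n) (k : 'I_m * bool) : 'I_n * bool := (widen_ord h k.1, k.2).

Lemma widen_idx_inj m n (h : m <= n) : injective (widen_idx h).
Proof. by move=> [p b] [p' b'] [/val_inj-> ->]. Qed.

Lemma shortenE (T : eqType) (e : rel T) x p : path e x p ->
  [/\ path e x (shorten x p), last x (shorten x p) = last x p,
      uniq (x :: shorten x p) & {subset shorten x p <= p}].
Proof. by move=> exp; case: (shortenP exp). Qed.

Lemma pick_inj (T : finType) (U : eqType) (f : T -> U) k :
  injective f -> [pick j | f j == f k] = Some k.
Proof.
move=> f_inj; case: pickP => [j /eqP/f_inj-> // | /(_ k)].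
by rewrite eqxx.
Qed.

Definition d0 : 'I_3 := @Ordinal 3 0 isT.
Definition d1 : 'I_3 := @Ordinal 3 1 isT.
Definition d2 : 'I_3 := @Ordinal 3 2 isT.

Section E3C.
Variables r s t : nat.
Local Notation V := (e3c_vertex r s t).
Local Notation adj := (@e3c_adj r s t).
Implicit Types (a : word r) (b : word s) (c : word t) (x y : V).

Definition vtx a b c (d : 'I_3) : V := (a, b, c, d).

Lemma vtx_eta x : x = vtx (vA x) (vB x) (vC x) (vd x).
Proof. by case: x => [[[]]]. Qed.

Lemma adj_dim a b c d d' : d != d' -> adj (vtx a b c d) (vtx a b c d').
Proof. by move=> dd'; rewrite /e3c_adj /= !eqxx dd'. Qed.

Lemma adjC a b c c' : diff1 c c' -> adj (vtx a b c d0) (vtx a b c' d0).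
Proof. by move=> cc'; rewrite /e3c_adj /= !eqxx cc' orbT. Qed.

Lemma adjB a b b' c : diff1 b b' -> adj (vtx a b c d1) (vtx a b' c d1).
Proof. by move=> bb'; rewrite /e3c_adj /= !eqxx bb' !orbT. Qed.

Lemma adjA a a' b c : diff1 a a' -> adj (vtx a b c d2) (vtx a' b c d2).
Proof. by move=> aa'; rewrite /e3c_adj /= !eqxx aa' !orbT. Qed.

Lemma e3c_adj_sym x y : adj x y = adj y x.
Proof.
rewrite /e3c_adj (eq_sym (vA x)) (eq_sym (vB x)) (eq_sym (vC x)) (eq_sym (vd x)).
rewrite (diff1C (vC x)) (diff1C (vB x)) (diff1C (vA x)).
by case: (val (vd x) == 0); case: (val (vd y) == 0); case: (val (vd x) == 1);
  case: (val (vd y) == 1); case: (val (vd x) == 2); case: (val (vd y) == 2).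
Qed.

Inductive leg := Hop of V | WalkA of word r & seq 'I_r | WalkC of word t & seq 'I_t.

Definition leg_seg x m : seq V :=
  match m with
  | Hop y => [:: y]
  | WalkA a o => [seq vtx Z (vB x) (vC x) (vd x) | Z <- word_walk (vA x) a o]
  | WalkC c o => [seq vtx (vA x) (vB x) Z (vd x) | Z <- word_walk (vC x) c o]
  end.

Definition leg_end x m : V :=
  match m with
  | Hop y => y
  | WalkA a _ => vtx a (vB x) (vC x) (vd x)
  | WalkC c _ => vtx (vA x) (vB x) c (vd x)
  end.

Definition leg_ok x m : bool :=
  match m with
  | Hop y => adj x y
  | WalkA _ o => (vd x == d2) && covering o
  | WalkC _ o => (vd x == d0) && covering o
  end.

Definition leg_cost m : nat :=
  match m with Hop _ => 1 | WalkA _ o => size o | WalkC _ o => size o end.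

Fixpoint route x ms : seq V :=
  if ms is m :: ms' then leg_seg x m ++ route (leg_end x m) ms' else [::].

Fixpoint route_ok x ms : Prop :=
  if ms is m :: ms' then leg_ok x m /\ route_ok (leg_end x m) ms' else True.

Fixpoint route_end x ms : V :=
  if ms is m :: ms' then route_end (leg_end x m) ms' else x.

Lemma leg_seg_path x m : leg_ok x m ->
  path adj x (leg_seg x m) && (last x (leg_seg x m) == leg_end x m).
Proof.
case: m => [y|a o|c o] /=; first by move=> ->; rewrite eqxx.
- case/andP=> /eqP dx co; rewrite (vtx_eta x) dx /= (last_map (fun Z => vtx Z _ _ d2)).
  rewrite last_word_walk_covering // eqxx andbT.
  by apply: homo_path (word_walk_path _ _ _) => Z Z'; exact: adjA.
- case/andP=> /eqP dx co; rewrite (vtx_eta x) dx /= (last_map (fun Z => vtx _ _ Z d0)).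
  rewrite last_word_walk_covering // eqxx andbT.
  by apply: homo_path (word_walk_path _ _ _) => Z Z'; exact: adjC.
Qed.

Lemma route_path x ms : route_ok x ms ->
  path adj x (route x ms) && (last x (route x ms) == route_end x ms).
Proof.
elim: ms x => [|m ms IH] x /=; first by rewrite eqxx.
case=> /leg_seg_path/andP[pm /eqP lm] /IH/andP[pms lms].
by rewrite cat_path last_cat pm lm pms.
Qed.

Lemma size_route x ms : size (route x ms) <= \sum_(m <- ms) leg_cost m.
Proof.
elim: ms x => [|m ms IH] x; first by rewrite big_nil.
rewrite big_cons /= size_cat leq_add //.
by case: m => [y|a o|c o] /=; rewrite // size_map size_word_walk.
Qed.

Definition disjoint_paths u v (n L : nat) :=
  exists P : 'I_n -> seq V,
    (forall i, is_path u v (P i) /\ size (P i) <= L) /\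
    (forall i j, i != j -> int_disjoint u v (P i) (P j)).

Lemma disjoint_pathsC u v n L : disjoint_paths u v n L -> disjoint_paths v u n L.
Proof.
have rev_lastI (p : seq V) : last u p :: rev (belast u p) = rev (u :: p).
  by rewrite [u :: p]lastI rev_rcons.
case=> P [pathP disjP]; exists (fun i => rev (belast u (P i))); split.
  move=> i; have [/and3P[pi /eqP li ui] si] := pathP i.
  split; last by rewrite size_rev size_belast.
  apply/and3P; split.
  - by rewrite -li rev_path; apply: sub_path pi => y z; rewrite /= e3c_adj_sym.
  - case: (P i) li => [/= -> //|y p] /= li.
    by rewrite rev_cons last_rcons.
  - by rewrite -li rev_lastI rev_uniq.
move=> i j ij x; have [/and3P[_ /eqP li _] _] := pathP i; have [/and3P[_ /eqP lj _] _] := pathP j.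
rewrite -{1}li -{1}lj !rev_lastI !mem_rev => xi xj.
by case: (disjP i j ij x xi xj) => ->; [right | left].
Qed.

Lemma disjoint_paths_of_walks (I : finType) (W : I -> seq V) (owner : V -> I) u v n L :
  #|I| = n ->
  (forall i, path adj u (W i) && (last u (W i) == v)) ->
  (forall i, size (W i) <= L) ->
  (forall i x, x \in W i -> [\/ x = u, x = v | owner x = i]) ->
  disjoint_paths u v n L.
Proof.
move=> cardI walkW sizeW ownerW.
pose idx (k : 'I_n) : I := enum_val (cast_ord (esym cardI) k).
have idx_inj : injective idx by move=> k k' /enum_val_inj /cast_ord_inj.
have shortW k := shortenE (proj1 (andP (walkW (idx k)))).
exists (fun k => shorten u (W (idx k))); split.
  move=> k; have [pq lq uq sq] := shortW k; have /andP[_ /eqP lk] := walkW (idx k).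
  rewrite /is_path pq lq lk uq eqxx; split=> //.
  by apply: leq_trans (sizeW (idx k)); apply: uniq_leq_size; [case/andP: uq | ].
move=> k k' kk' x; have [_ _ _ sq] := shortW k; have [_ _ _ sq'] := shortW k'.
case/predU1P=> [->|/sq /ownerW [->|->|ox]]; [by left | by left | by right |].
case/predU1P=> [->|/sq' /ownerW [->|->|ox']]; [by left | by left | by right |].
by case/eqP: kk'; apply: idx_inj; rewrite -ox -ox'.
Qed.

Lemma disjoint_paths_of_routes (R : 'I_r * bool + bool -> seq leg)
    (owner : V -> 'I_r * bool + bool) u v L :
  (forall i, route_ok u (R i) /\ route_end u (R i) = v) ->
  (forall i, size (route u (R i)) <= L) ->
  (forall i x, x \in route u (R i) -> [\/ x = u, x = v | owner x = i]) ->
  disjoint_paths u v (2 * r + 2) L.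
Proof.
move=> okR sizeR ownerR; apply: (disjoint_paths_of_walks _ _ sizeR ownerR).
  by rewrite card_sum card_prod card_ord card_bool; lia.
by move=> i; have [ok <-] := okR i; exact: route_path.
Qed.

End E3C.

Arguments Hop {r s t}.
Arguments WalkA {r s t}.
Arguments WalkC {r s t}.

Ltac diff1_tac := by rewrite ?diff1_nbr // diff1C diff1_nbr.

Ltac route_ok_tac :=
  repeat match goal with |- _ /\ _ => split end;
  match goal with
  | |- True => exact: I
  | |- _ = _ => reflexivity
  | |- is_true (covering _) =>
      first [exact: covering_enum | exact: covering_first | exact: covering_last]
  | |- is_true (e3c_adj (vtx ?a ?b ?c _) (vtx ?a ?b ?c _)) => by apply: adj_dim
  | |- is_true (e3c_adj (vtx _ ?b ?c _) (vtx _ ?b ?c _)) => apply: adjA; diff1_tac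
  | |- is_true (e3c_adj (vtx ?a _ ?c _) (vtx ?a _ ?c _)) => apply: adjB; diff1_tac
  | |- is_true (e3c_adj (vtx ?a ?b _ _) (vtx ?a ?b _ _)) => apply: adjC; diff1_tac
  end.

Ltac route_cases :=
  repeat match goal with
  | |- is_true (_ \in _ ++ _) -> _ => rewrite mem_cat => /orP[]
  | |- is_true (_ \in _ :: _) -> _ => rewrite in_cons => /orP[/eqP-> |]
  | |- is_true (_ \in [::]) -> _ => by []
  | |- is_true (_ \in map _ _) -> _ =>
      let Z := fresh "Z" in let HZ := fresh "HZ" in case/mapP => Z HZ ->
  end.

Section From2To1.
Variables (r s t : nat) (A A' : word r) (B : word s) (C C' : word t).
Hypotheses (r_gt0 : 0 < r) (r_le_s : r <= s) (s_le_t : s <= t) (AA' : A != A') (CC' : C != C').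
Local Notation V := (e3c_vertex r s t).
Local Notation I := ('I_r * bool + bool)%type.

Let u : V := vtx A B C d2.
Let v : V := vtx A' B C' d1.
Let p0 : 'I_r := Ordinal r_gt0.
Let q0 : 'I_t := widen_ord (leq_trans r_le_s s_le_t) p0.
Let BK (k : 'I_r * bool) := nbr B (widen_idx r_le_s k).
(* a neighbour of C' other than C *)
Let C'' := nbr C' (q0, nbr C' (q0, false) == C).

Definition route21 (i : I) : seq (leg r s t) :=
  match i with
  | inl k =>
    [:: Hop (vtx (nbr A k) B C d2); Hop (vtx (nbr A k) B C d1); Hop (vtx (nbr A k) (BK k) C d1);
        Hop (vtx (nbr A k) (BK k) C d2); WalkA A' (ord_last k.1); Hop (vtx A' (BK k) C d0);
        WalkC C' (enum 'I_t); Hop (vtx A' (BK k) C' d1); Hop v]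
  | inr true =>
    [:: Hop (vtx A B C d1); Hop (vtx A (BK (p0, false)) C d1); Hop (vtx A (BK (p0, false)) C d0);
        WalkC C' (enum 'I_t); Hop (vtx A (BK (p0, false)) C' d1); Hop (vtx A B C' d1);
        Hop (vtx A B C' d2); WalkA A' (enum 'I_r); Hop v]
  | inr false =>
    [:: Hop (vtx A B C d0); WalkC C'' (enum 'I_t); Hop (vtx A B C'' d2); WalkA A' (enum 'I_r);
        Hop (vtx A' B C'' d0); Hop (vtx A' B C' d0); Hop v]
  end.

Lemma route21_ok i : route_ok u (route21 i) /\ route_end u (route21 i) = v.
Proof. by case: i => [k|[]]; rewrite /= /vA /vB /vC /vd /u /v /=; route_ok_tac. Qed.

Lemma route21_size i : size (route u (route21 i)) <= r + t + 7.
Proof.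
apply: leq_trans (size_route _ _) _.
by case: i => [k|[]]; rewrite !big_cons big_nil /= ?size_ord_last ?size_enum_ord; lia.
Qed.

Definition owner21 (x : V) : I :=
  if vB x == B then
    if (vd x == d0) || (vC x == C'') then inr false
    else if (vA x == A) || (vC x == C') then inr true
    else oapp inl (inr true) [pick k | nbr A k == vA x]
  else if vA x == A then inr true else oapp inl (inr true) [pick k | BK k == vB x].

Let nA k : (nbr A k == A) = false. Proof. exact/negbTE/nbr_neq. Qed.
Let nB k : (BK k == B) = false. Proof. exact/negbTE/nbr_neq. Qed.
Let BK_inj : injective BK. Proof. exact: inj_comp (@nbr_inj _ B) (@widen_idx_inj _ _ _). Qed.
Let nCC'' : (C == C'') = false. Proof. by apply/negbTE; rewrite eq_sym nbr_avoid. Qed.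
Let nC'C'' : (C' == C'') = false. Proof. by apply/negbTE; rewrite eq_sym nbr_neq. Qed.
Let nCC' : (C == C') = false. Proof. exact/negbTE. Qed.
Let nA' : (A' == A) = false. Proof. by apply/negbTE; rewrite eq_sym. Qed.

Let walk_avoids_A k Z : Z \in word_walk (nbr A k) A' (ord_last k.1) -> (Z == A) = false.
Proof.
move=> HZ; apply/negbTE/(word_walk_last_neq HZ); last by rewrite eq_sym.
by rewrite ffunE eqxx shift3_neq.
Qed.

Lemma route21_owner i x : x \in route u (route21 i) -> [\/ x = u, x = v | owner21 x = i].
Proof.
case: i => [k|[]] /=; route_cases; try by constructor 2.
all: constructor 3; rewrite /owner21 /vA /vB /vC /vd /=.
all: by rewrite ?eqxx ?nA ?nB ?nCC'' ?nC'C'' ?nCC' ?nA' ?(walk_avoids_A HZ) ?orbT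
  ?(pick_inj _ (@nbr_inj _ A)) ?(pick_inj _ BK_inj).
Qed.

Lemma disjoint_paths21 : disjoint_paths u v (2 * r + 2) (r + t + 7).
Proof. exact: disjoint_paths_of_routes route21_ok route21_size route21_owner. Qed.

End From2To1.

Section From0To1.
Variables (r s t : nat) (A A' : word r) (B : word s) (C C' : word t).
Hypotheses (r_gt0 : 0 < r) (r_le_s : r <= s) (s_le_t : s <= t) (AA' : A != A') (CC' : C != C').
Local Notation V := (e3c_vertex r s t).
Local Notation I := ('I_r * bool + bool)%type.

Let u : V := vtx A B C d0.
Let v : V := vtx A' B C' d1.
Let p0 : 'I_r := Ordinal r_gt0.
Let BK (k : 'I_r * bool) := nbr B (widen_idx r_le_s k).
Let CK (k : 'I_r * bool) := nbr C (widen_idx (leq_trans r_le_s s_le_t) k).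

Definition bypass01 (b : word s) : seq (leg r s t) :=
  [:: Hop (vtx A B C d1); Hop (vtx A b C d1); Hop (vtx A b C d2); WalkA A' (enum 'I_r);
      Hop (vtx A' b C d0); WalkC C' (enum 'I_t); Hop (vtx A' b C' d1); Hop v].

Definition route01 (i : I) : seq (leg r s t) :=
  match i with
  | inl k =>
    if CK k == C' then
      [:: Hop (vtx A B C' d0); Hop (vtx A B C' d2); WalkA A' (enum 'I_r); Hop v]
    else
      [:: Hop (vtx A B (CK k) d0); Hop (vtx A B (CK k) d1); Hop (vtx A (BK k) (CK k) d1);
          Hop (vtx A (BK k) (CK k) d2); WalkA A' (enum 'I_r); Hop (vtx A' (BK k) (CK k) d0);
          WalkC C' (enum 'I_t); Hop (vtx A' (BK k) C' d1); Hop v]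
  | inr true =>
    [:: Hop (vtx A B C d2); WalkA A' (enum 'I_r); Hop (vtx A' B C d0); WalkC C' (enum 'I_t); Hop v]
  | inr false =>
    (* if CK k = C', path k goes straight to C' and leaves BK k free *)
    if [pick k | CK k == C'] is Some k then bypass01 (BK k) else
      [:: Hop (vtx A B C d1); Hop (vtx A (BK (p0, false)) C d1); Hop (vtx A (BK (p0, false)) C d0);
          WalkC C' (enum 'I_t); Hop (vtx A (BK (p0, false)) C' d1); Hop (vtx A B C' d1);
          Hop (vtx A B C' d2); WalkA A' (enum 'I_r); Hop v]
  end.

Lemma route01_ok i : route_ok u (route01 i) /\ route_end u (route01 i) = v.
Proof.
case: i => [k|[]]; rewrite /route01.
- case: ifP => [/eqP CKk|_]; rewrite /= /vA /vB /vC /vd /u /v /=; last by route_ok_tac.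
  have CC'1 : diff1 C C' by rewrite -CKk diff1_nbr.
  by route_ok_tac.
- by rewrite /= /vA /vB /vC /vd /u /v /=; route_ok_tac.
- by case: pickP => [k _|_]; rewrite /= /vA /vB /vC /vd /u /v /=; route_ok_tac.
Qed.

Lemma route01_size i : size (route u (route01 i)) <= r + t + 7.
Proof.
apply: leq_trans (size_route _ _) _.
case: i => [k|[]]; rewrite /route01; first case: ifP => _; last case: pickP => [? _|_].
all: by rewrite !big_cons big_nil /= ?size_enum_ord; lia.
Qed.

Definition owner01 (x : V) : I :=
  let byC dflt := oapp inl dflt [pick k | CK k == vC x] in
  if vB x == B then
    if vd x == d1 then (if (vC x == C) || (vC x == C') then inr false else byC (inr false))
    else if (vd x == d0) && (vA x != A) then inr true
    else if vC x == C then inr true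
    else byC (inr false)
  else if [pick k | BK k == vB x] is Some k then
    if (CK k == C') || (vA x == A) && ((vd x == d0) || (vC x != CK k)) then inr false else inl k
  else inr false.

Let nC k : (CK k == C) = false. Proof. exact/negbTE/nbr_neq. Qed.
Let nB k : (BK k == B) = false. Proof. exact/negbTE/nbr_neq. Qed.
Let BK_inj : injective BK. Proof. exact: inj_comp (@nbr_inj _ B) (@widen_idx_inj _ _ _). Qed.
Let CK_inj : injective CK. Proof. exact: inj_comp (@nbr_inj _ C) (@widen_idx_inj _ _ _). Qed.
Let nCC' : (C == C') = false. Proof. exact/negbTE. Qed.
Let nC'C : (C' == C) = false. Proof. by apply/negbTE; rewrite eq_sym. Qed.
Let nA' : (A' == A) = false. Proof. by apply/negbTE; rewrite eq_sym. Qed.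

Lemma route01_owner_main k x :
  x \in route u (route01 (inl k)) -> [\/ x = u, x = v | owner01 x = inl k].
Proof.
rewrite /route01; case: ifP => CKk; first move/eqP: (CKk) => <-.
all: rewrite /=; route_cases; try by constructor 2.
all: constructor 3; rewrite /owner01 /vA /vB /vC /vd /=.
all: by rewrite ?eqxx ?nA' ?nB ?nC ?(pick_inj _ CK_inj) ?(pick_inj _ BK_inj) ?andbF ?orbT /=
  ?CKk ?eqxx ?andbF.
Qed.

Lemma route01_owner_direct x :
  x \in route u (route01 (inr true)) -> [\/ x = u, x = v | owner01 x = inr true].
Proof.
rewrite /=; route_cases; try by constructor 2.
all: constructor 3; rewrite /owner01 /vA /vB /vC /vd /=.
all: by rewrite ?eqxx ?nA' ?nC'C.
Qed.

Lemma route01_owner_bypass k0 x : CK k0 = C' ->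
  x \in route u (bypass01 (BK k0)) -> [\/ x = u, x = v | owner01 x = inr false].
Proof.
move=> CKk0; rewrite /=; route_cases; try by constructor 2.
all: constructor 3; rewrite /owner01 /vA /vB /vC /vd /=.
all: by rewrite ?eqxx ?nA' ?nB ?nCC' ?nC'C ?(pick_inj _ BK_inj) /= ?CKk0 ?eqxx.
Qed.

Lemma route01_owner_detour x :
  x \in route u (route01 (inr false)) -> [\/ x = u, x = v | owner01 x = inr false].
Proof.
rewrite /route01; case: pickP => [k0 /eqP CKk0 | noCK].
  exact: route01_owner_bypass.
have nCK k : (CK k == C') = false by exact: noCK.
have nCK' k : (C' == CK k) = false by rewrite eq_sym.
have nCs k : (C == CK k) = false by rewrite eq_sym.
have noPick : [pick k | CK k == C'] = None by case: pickP => // k; rewrite nCK.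
rewrite /=; route_cases; try by constructor 2.
all: constructor 3; rewrite /owner01 /vA /vB /vC /vd /=.
all: by rewrite ?eqxx ?nA' ?nB ?nCC' ?nC'C ?(pick_inj _ BK_inj) ?noPick /= ?nCK ?nCK' ?nCs.
Qed.

Lemma route01_owner i x : x \in route u (route01 i) -> [\/ x = u, x = v | owner01 x = i].
Proof.
case: i => [k|[]]; [exact: route01_owner_main | exact: route01_owner_direct |].
exact: route01_owner_detour.
Qed.

Lemma disjoint_paths01 : disjoint_paths u v (2 * r + 2) (r + t + 7).
Proof. exact: disjoint_paths_of_routes route01_ok route01_size route01_owner. Qed.

End From0To1.

Section From2To0.
Variables (r s t : nat) (A A' : word r) (B : word s) (C C' : word t).
Hypotheses (r_gt0 : 0 < r) (r_le_s : r <= s) (s_le_t : s <= t) (AA' : A != A') (CC' : C != C').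
Local Notation V := (e3c_vertex r s t).
Local Notation I := ('I_r * bool + bool)%type.

Let u : V := vtx A B C d2.
Let v : V := vtx A' B C' d0.
Let p0 : 'I_r := Ordinal r_gt0.
Let r_le_t := leq_trans r_le_s s_le_t.
Let B1 := nbr B (widen_idx r_le_s (p0, false)).

(* The neighbour of u equal to A' and the neighbour of v equal to C, when both exist, must
   serve the same path: the short path through vtx A' B C d0. *)
Definition swap20 : {perm 'I_r * bool} :=
  match [pick k | nbr A k == A'], [pick k | nbr C' (widen_idx r_le_t k) == C] with
  | Some kA, Some kC => tperm kA kC
  | _, _ => 1%g
  end.

Let kpos k := widen_idx r_le_t (swap20 k).
Let K k := nbr C' (kpos k).
Let special k := (nbr A k == A') || (K k == C).
Let kS := odflt (p0, false) [pick k | special k].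

Let K_inj : injective K.
Proof. exact: inj_comp (@nbr_inj _ C') (inj_comp (@widen_idx_inj _ _ _) (@perm_inj _ _)). Qed.

Lemma K_twist k : nbr A k = A' -> (exists j, nbr C' (widen_idx r_le_t j) = C) -> K k = C.
Proof.
move=> Ak [j Kj]; rewrite /K /kpos /swap20.
case: pickP => [kA /eqP AkA | /(_ k)]; last by rewrite Ak eqxx.
case: pickP => [kC /eqP <- | /(_ j)]; last by rewrite Kj eqxx.
by rewrite (@nbr_inj _ A k kA) ?Ak ?AkA // tpermL.
Qed.

Lemma special_uniq j k : special j -> special k -> j = k.
Proof.
have A_inj := @nbr_inj _ A.
rewrite /special => /orP[/eqP Aj | /eqP Kj] /orP[/eqP Ak | /eqP Kk].
- by apply: A_inj; rewrite Aj Ak.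
- by apply: K_inj; rewrite Kk K_twist //; exists (swap20 k).
- by apply: K_inj; rewrite Kj K_twist //; exists (swap20 j).
- by apply: K_inj; rewrite Kj Kk.
Qed.

Lemma special_kS k : special k -> kS = k.
Proof.
move=> sk; rewrite /kS; case: pickP => [j sj | /(_ k)]; last by rewrite sk.
exact: special_uniq.
Qed.

Definition jumpA20 k : seq (leg r s t) :=
  [:: Hop (vtx A' B C d2); Hop (vtx A' B C d0); WalkC (K k) (ord_first (kpos k).1); Hop v].

Definition jumpC20 k : seq (leg r s t) :=
  [:: Hop (vtx (nbr A k) B C d2); WalkA A' (ord_last k.1); Hop (vtx A' B C d0); Hop v].

Definition main20 k : seq (leg r s t) :=
  [:: Hop (vtx (nbr A k) B C d2); Hop (vtx (nbr A k) B C d0); WalkC (K k) (enum 'I_t);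
      Hop (vtx (nbr A k) B (K k) d2); WalkA A' (enum 'I_r); Hop (vtx A' B (K k) d0); Hop v].

Definition route20 (i : I) : seq (leg r s t) :=
  match i with
  | inl k => if nbr A k == A' then jumpA20 k else if K k == C then jumpC20 k else main20 k
  | inr true =>
    [:: Hop (vtx A B C d1); Hop (vtx A B1 C d1); Hop (vtx A B1 C d2); WalkA A' (enum 'I_r);
        Hop (vtx A' B1 C d0); WalkC C' (enum 'I_t); Hop (vtx A' B1 C' d1); Hop (vtx A' B C' d1);
        Hop v]
  | inr false =>
    [:: Hop (vtx A B C d0); WalkC C' (enum 'I_t); Hop (vtx A B C' d2); WalkA A' (enum 'I_r); Hop v]
  end.

Lemma route20_ok i : route_ok u (route20 i) /\ route_end u (route20 i) = v.
Proof.
case: i => [k|[]]; rewrite /route20.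
- case: ifP => [/eqP Ak|_]; last case: ifP => [/eqP Kk|_].
  + have AA'1 : diff1 A A' by rewrite -Ak diff1_nbr.
    by rewrite /= /vA /vB /vC /vd /u /v /=; route_ok_tac.
  + have CC'1 : diff1 C C' by rewrite -Kk diff1C diff1_nbr.
    by rewrite /= /vA /vB /vC /vd /u /v /=; route_ok_tac.
  + by rewrite /= /vA /vB /vC /vd /u /v /=; route_ok_tac.
- by rewrite /= /vA /vB /vC /vd /u /v /=; route_ok_tac.
- by rewrite /= /vA /vB /vC /vd /u /v /=; route_ok_tac.
Qed.

Lemma route20_size i : size (route u (route20 i)) <= r + t + 7.
Proof.
apply: leq_trans (size_route _ _) _.
case: i => [k|[]]; rewrite /route20; first (case: ifP => _; last case: ifP => _).
all: by rewrite !big_cons big_nil /= ?size_others ?size_ord_last ?size_enum_ord; lia.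
Qed.

Definition owner20 (x : V) : I :=
  if (vB x != B) || (vd x == d1) then inr true
  else if vd x == d2 then
    if vC x == C' then inr false
    else if vC x == C then oapp inl (inl kS) [pick k | nbr A k == vA x]
    else oapp inl (inr true) [pick k | K k == vC x]
  else if vA x == A then inr false
  else if vA x == A' then oapp inl (inl kS) [pick k | (K k == vC x) && ~~ special k]
  else oapp inl (inr true) [pick k | nbr A k == vA x].

Let nA k : (nbr A k == A) = false. Proof. exact/negbTE/nbr_neq. Qed.
Let nK k : (K k == C') = false. Proof. exact/negbTE/nbr_neq. Qed.
Let nB1 : (B1 == B) = false. Proof. exact/negbTE/nbr_neq. Qed.
Let nCC' : (C == C') = false. Proof. exact/negbTE. Qed.
Let nA' : (A' == A) = false. Proof. by apply/negbTE; rewrite eq_sym. Qed.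

Lemma pick_K_regular k : ~~ special k -> [pick j | (K j == K k) && ~~ special j] = Some k.
Proof.
move=> nsk; case: pickP => [j /andP[/eqP /K_inj -> //] | /(_ k)].
by rewrite eqxx nsk.
Qed.

Lemma pick_K_C : [pick j | (K j == C) && ~~ special j] = None.
Proof. by case: pickP => // j; rewrite /special => /andP[-> ]; rewrite orbT. Qed.

Lemma pick_K_special k (W : word t) : special k -> W (kpos k).1 = K k (kpos k).1 ->
  [pick j | (K j == W) && ~~ special j] = None.
Proof.
move=> sk WK; case: pickP => // j /andP[/eqP Kj]; suff -> : j = k by rewrite sk.
apply/(@perm_inj _ swap20)/(@widen_idx_inj _ _ r_le_t)/(@nbr_at_inj _ C').
by rewrite -/(K j) Kj.
Qed.

Lemma route20_owner_jumpA k x : nbr A k = A' ->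
  x \in route u (jumpA20 k) -> [\/ x = u, x = v | owner20 x = inl k].
Proof.
move=> Ak; have sk : special k by rewrite /special Ak eqxx.
rewrite /=; route_cases; try by constructor 2.
all: constructor 3; rewrite /owner20 /vA /vB /vC /vd /= ?eqxx /=.
- by rewrite nCC' -Ak (pick_inj _ (@nbr_inj _ A)).
- by rewrite nA' pick_K_C /= (special_kS sk).
- by rewrite nA' (pick_K_special sk (word_walk_first HZ)) /= (special_kS sk).
Qed.

Lemma route20_owner_jumpC k x : K k = C -> nbr A k != A' ->
  x \in route u (jumpC20 k) -> [\/ x = u, x = v | owner20 x = inl k].
Proof.
move=> Kk Ak; have sk : special k by rewrite /special Kk eqxx orbT.
rewrite /=; route_cases; try by constructor 2.
all: constructor 3; rewrite /owner20 /vA /vB /vC /vd /= ?eqxx /= ?nCC'.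
- by rewrite (pick_inj _ (@nbr_inj _ A)).
- case: pickP => [j /eqP Aj | _] /=; last by rewrite (special_kS sk).
  congr inl; case/word_walk_last: HZ => [Zk | ZA']; last first.
    by apply: special_uniq sk; rewrite /special Aj ZA' eqxx.
  by apply: (@nbr_at_inj _ A); rewrite Aj.
- by rewrite nA' pick_K_C /= (special_kS sk).
Qed.

Lemma route20_owner_main k x : ~~ special k ->
  x \in route u (main20 k) -> [\/ x = u, x = v | owner20 x = inl k].
Proof.
move=> sk; have /norP[/negbTE Ak /negbTE Kk] := sk.
rewrite /=; route_cases; try by constructor 2.
all: constructor 3; rewrite /owner20 /vA /vB /vC /vd /= ?eqxx /=.
all: by rewrite ?nCC' ?nA ?nA' ?Ak ?nK ?Kk ?(pick_K_regular sk)
  ?(pick_inj _ (@nbr_inj _ A)) ?(pick_inj _ K_inj).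
Qed.

Lemma route20_owner_extra (b : bool) x :
  x \in route u (route20 (inr b)) -> [\/ x = u, x = v | owner20 x = inr b].
Proof.
case: b; rewrite /=; route_cases; try by constructor 2.
all: constructor 3; rewrite /owner20 /vA /vB /vC /vd /= ?eqxx /=.
all: by rewrite ?nB1 ?eqxx.
Qed.

Lemma route20_owner i x : x \in route u (route20 i) -> [\/ x = u, x = v | owner20 x = i].
Proof.
case: i => [k|b]; last exact: route20_owner_extra.
rewrite /route20; case: ifP => [/eqP Ak|/negbT Ak]; first exact: route20_owner_jumpA.
case: ifP => [/eqP Kk|/negbT Kk]; first exact: route20_owner_jumpC.
by apply: route20_owner_main; rewrite /special negb_or Ak Kk.
Qed.

Lemma disjoint_paths20 : disjoint_paths u v (2 * r + 2) (r + t + 7).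
Proof. exact: disjoint_paths_of_routes route20_ok route20_size route20_owner. Qed.

End From2To0.

Lemma ord3_cases (d : 'I_3) : [\/ d = d0, d = d1 | d = d2].
Proof.
case: d => [[|[|[|//]]] hd]; [constructor 1 | constructor 2 | constructor 3]; exact: val_inj.
Qed.

Theorem lemma19 (r s t : nat) (u v : e3c_vertex r s t) :
  1 <= r -> r <= s -> s <= t ->
  vA u != vA v -> vB u = vB v -> vC u != vC v -> vd u != vd v ->
  exists P : 'I_(2 * r + 2) -> seq (e3c_vertex r s t),
    (forall i, is_path u v (P i) /\ size (P i) <= r + t + 7) /\
    (forall i j, i != j -> int_disjoint u v (P i) (P j)).
Proof.
move=> r_gt0 r_le_s s_le_t; case: u v => [[[A B] C] d] [[[A' B'] C'] d'].
rewrite /vA /vB /vC /vd /= => AA' <- CC' dd'.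
have A'A : A' != A by rewrite eq_sym.
have C'C : C' != C by rewrite eq_sym.
change (disjoint_paths (vtx A B C d) (vtx A' B C' d') (2 * r + 2) (r + t + 7)).
case: (ord3_cases d) (ord3_cases d') dd' => -> [] -> // _.
- exact: disjoint_paths01.
- exact/disjoint_pathsC/disjoint_paths20.
- exact/disjoint_pathsC/disjoint_paths01.
- exact/disjoint_pathsC/disjoint_paths21.
- exact: disjoint_paths20.
- exact: disjoint_paths21.
Qed.
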